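(* Let $X$ be an admissible complete CAT(1) space and $T\colon X\to X$ a firmly vicinal mapping. If $\mathrm{Fix}(T)$ is nonempty, then for each $x\in X$ the sequence $\{T^nx\}$ is $\Delta$-convergent to an element of $\mathrm{Fix}(T)$.
   Context: A CAT(1) space is a $\pi$-geodesic metric space in which every geodesic triangle of perimeter $<2\pi$ satisfies the CAT(1) comparison inequality relative to comparison triangles in the unit sphere $\mathbb S^2$; it is admissible if $d(v,v')<\pi/2$ for all $v,v'$. The asymptotic center of $\{x_n\}$ is $\mathrm{AC}(\{x_n\})=\{z:\limsup_n d(x_n,z)=\inf_{y}\limsup_n d(x_n,y)\}$; $\{x_n\}$ is $\Delta$-convergent to $p$ if $\mathrm{AC}(\{x_{n_i}\})=\{p\}$ for every subsequence $\{x_{n_i}\}$. With $C_z=\cos d(Tz,z)$, $T$ is firmly vicinal if for all $x,y\in X$: $\bigl(C_x^2(1+C_y^2)C_y+C_y^2(1+C_x^2)C_x\bigr)\cos d(Tx,Ty)\ge C_x^2(1+C_y^2)\cos d(Tx,y)+C_y^2(1+C_x^2)\cos d(Ty,x)$. *)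

From Stdlib Require Import Reals Lra.
Open Scope R_scope.

Definition is_metric {X : Type} (d : X -> X -> R) : Prop :=
  (forall x y, 0 <= d x y) /\
  (forall x y, d x y = 0 <-> x = y) /\
  (forall x y, d x y = d y x) /\
  (forall x y z, d x z <= d x y + d y z).

Definition is_geodesic {X : Type} (d : X -> X -> R) (c : R -> X) (x y : X) : Prop :=
  c 0 = x /\ c (d x y) = y /\
  forall s t, 0 <= s <= d x y -> 0 <= t <= d x y -> d (c s) (c t) = Rabs (s - t).

Definition pi_geodesic {X : Type} (d : X -> X -> R) : Prop :=
  forall x y, d x y < PI -> exists c, is_geodesic d c x y.

Definition R3 : Type := (R * R * R)%type.
Definition dot3 (a b : R3) : R :=
  let '(a1, a2, a3) := a in let '(b1, b2, b3) := b in a1 * b1 + a2 * b2 + a3 * b3.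
Definition on_S2 (a : R3) : Prop := dot3 a a = 1.
Definition dS2 (a b : R3) : R := acos (dot3 a b).

(** A point [u] lies on the geodesic triangle side [c] (geodesic from [a] to [b]),
    and [ub] is its comparison point on the side [[ab, bb]] of the comparison
    triangle in S^2, i.e. the point of S^2 with dS2 ab ub = t and dS2 ub bb = d a b - t. *)
Definition side_point {X : Type} (d : X -> X -> R) (c : R -> X) (a b : X)
    (ab bb : R3) (u : X) (ub : R3) : Prop :=
  exists t, 0 <= t <= d a b /\ u = c t /\ on_S2 ub /\
    dS2 ab ub = t /\ dS2 ub bb = d a b - t.

Definition CAT1_ineq {X : Type} (d : X -> X -> R) : Prop :=
  forall (x1 x2 x3 : X) (c12 c23 c31 : R -> X),
    is_geodesic d c12 x1 x2 -> is_geodesic d c23 x2 x3 -> is_geodesic d c31 x3 x1 ->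
    d x1 x2 + d x2 x3 + d x3 x1 < 2 * PI ->
  forall (y1 y2 y3 : R3),
    on_S2 y1 -> on_S2 y2 -> on_S2 y3 ->
    dS2 y1 y2 = d x1 x2 -> dS2 y2 y3 = d x2 x3 -> dS2 y3 y1 = d x3 x1 ->
  let on_tri u ub :=
    side_point d c12 x1 x2 y1 y2 u ub \/
    side_point d c23 x2 x3 y2 y3 u ub \/
    side_point d c31 x3 x1 y3 y1 u ub in
  forall u ub v vb, on_tri u ub -> on_tri v vb -> d u v <= dS2 ub vb.

Definition CAT1_space {X : Type} (d : X -> X -> R) : Prop :=
  is_metric d /\ pi_geodesic d /\ CAT1_ineq d.

Definition admissible {X : Type} (d : X -> X -> R) : Prop :=
  forall v v', d v v' < PI / 2.

Definition complete_metric {X : Type} (d : X -> X -> R) : Prop :=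
  forall x : nat -> X,
    (forall eps, eps > 0 -> exists N, forall m n, (m >= N)%nat -> (n >= N)%nat ->
        d (x m) (x n) < eps) ->
    exists l, forall eps, eps > 0 -> exists N, forall n, (n >= N)%nat -> d (x n) l < eps.

Definition is_limsup (a : nat -> R) (L : R) : Prop :=
  forall eps, eps > 0 ->
    (exists N, forall n, (n >= N)%nat -> a n < L + eps) /\
    (forall N, exists n, (n >= N)%nat /\ L - eps < a n).

Definition in_AC {X : Type} (d : X -> X -> R) (x : nat -> X) (z : X) : Prop :=
  exists Lz, is_limsup (fun n => d (x n) z) Lz /\
    forall y Ly, is_limsup (fun n => d (x n) y) Ly -> Lz <= Ly.

Definition Delta_converges {X : Type} (d : X -> X -> R) (x : nat -> X) (p : X) : Prop :=
  forall phi : nat -> nat, (forall i, (phi i < phi (S i))%nat) ->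
    forall z, in_AC d (fun i => x (phi i)) z <-> z = p.

Definition firmly_vicinal {X : Type} (d : X -> X -> R) (T : X -> X) : Prop :=
  forall x y,
    let Cx := cos (d (T x) x) in
    let Cy := cos (d (T y) y) in
    (Cx ^ 2 * (1 + Cy ^ 2) * Cy + Cy ^ 2 * (1 + Cx ^ 2) * Cx) * cos (d (T x) (T y))
    >= Cx ^ 2 * (1 + Cy ^ 2) * cos (d (T x) y) + Cy ^ 2 * (1 + Cx ^ 2) * cos (d (T y) x).

From Stdlib Require Import Reals Lra Psatz Lia Classical ClassicalEpsilon.
From Coquelicot Require Lim_seq.
Open Scope R_scope.

(* A fixed point q turns the firmly vicinal inequality into
   cos d(x,q) <= cos d(Tx,x) cos d(Tx,q).  Hence the orbit x_n = T^n x is Fejer monotone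
   with respect to Fix T, and since d(x_n,q) converges, cos d(Tx_n,x_n) -> 1: the orbit is
   asymptotically regular.
   Comparison with a spherical triangle shows that the midpoint m of y and p satisfies
   cos d(x,y) + cos d(x,p) <= 2 cos (d(y,p)/2) cos d(x,m).  Passing to limsups, this makes
   asymptotic centers unique, and makes every sequence of points whose asymptotic radii
   approach the infimum Cauchy, so asymptotic centers exist by completeness.  By asymptotic
   regularity the asymptotic center of every subsequence of the orbit is a fixed point.
   Distances from the orbit to fixed points converge, so their asymptotic radii are the
   same along every subsequence; therefore the asymptotic center of the whole orbit is the
   asymptotic center of each subsequence. *)

Lemma cos_lipschitz u v : Rabs (cos u - cos v) <= Rabs (u - v).
Proof.
  destruct (MVT_abs cos (fun c => - sin c) v u) as [c [Hc _]].
  { intros c _. apply derivable_pt_lim_cos. }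
  rewrite Hc, Rabs_Ropp.
  assert (Rabs (sin c) <= 1) by (apply Rabs_le, SIN_bound).
  pose proof (Rabs_pos (u - v)); nra.
Qed.

Lemma cos_ge_sub_abs u v : cos u - Rabs (u - v) <= cos v.
Proof. pose proof (cos_lipschitz u v); pose proof (Rle_abs (cos u - cos v)); lra. Qed.

Lemma cos_antitone u v : 0 <= u -> u <= v -> v <= PI -> cos v <= cos u.
Proof.
  intros Hu Huv Hv; destruct (Req_dec u v) as [<-|Hne]; [lra|].
  left; apply cos_decreasing_1; lra.
Qed.

Lemma cos_le_cos_reflect u v : 0 <= u <= PI -> 0 <= v <= PI -> cos u <= cos v -> v <= u.
Proof.
  intros Hu Hv Hc; destruct (Rle_or_lt v u) as [|Hlt]; [assumption|].
  pose proof (cos_decreasing_1 u v ltac:(lra) ltac:(lra) ltac:(lra) ltac:(lra) Hlt); lra.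
Qed.

Lemma sqr_div3_le_1_sub_cos t : 0 <= t <= PI / 2 -> t ^ 2 / 3 <= 1 - cos t.
Proof.
  intros Ht; pose proof PI2_1; pose proof PI_4.
  destruct (cos_bound t 0 ltac:(lra) ltac:(lra)) as [_ Hcos].
  unfold cos_approx, cos_term in Hcos; simpl in Hcos.
  (* [Hcos] is [cos t <= 1 - t^2/2 + t^4/24]. *)
  assert (Ht2 : t * t <= 4) by nra.
  nra.
Qed.

Lemma lt_of_1_sub_cos_lt t e : 0 <= t <= PI / 2 -> 0 < e -> 1 - cos t < e ^ 2 / 3 -> t < e.
Proof. intros Ht He Hc; pose proof (sqr_div3_le_1_sub_cos t Ht); nra. Qed.

Definition circle_pt (t : R) : R3 := (cos t, sin t, 0).

Lemma dot3_comm a b : dot3 a b = dot3 b a.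
Proof. destruct a as [[a1 a2] a3], b as [[b1 b2] b3]; simpl; ring. Qed.

Lemma dot3_S2_bound a b : on_S2 a -> on_S2 b -> -1 <= dot3 a b <= 1.
Proof.
  destruct a as [[a1 a2] a3], b as [[b1 b2] b3]; unfold on_S2; simpl; intros Ha Hb.
  pose proof (Rle_0_sqr (a1 - b1)); pose proof (Rle_0_sqr (a2 - b2)); pose proof (Rle_0_sqr (a3 - b3)).
  pose proof (Rle_0_sqr (a1 + b1)); pose proof (Rle_0_sqr (a2 + b2)); pose proof (Rle_0_sqr (a3 + b3)).
  unfold Rsqr in *; split; nra.
Qed.

Lemma dot3_le_cos_of_le_dS2 a b t : on_S2 a -> on_S2 b -> 0 <= t -> t <= dS2 a b ->
  dot3 a b <= cos t.
Proof.
  intros Ha Hb Ht Htd; unfold dS2 in Htd.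
  rewrite <- (cos_acos (dot3 a b)) by (apply dot3_S2_bound; assumption).
  apply cos_antitone; [assumption..|apply acos_bound].
Qed.

Lemma on_S2_circle_pt t : on_S2 (circle_pt t).
Proof. unfold on_S2, circle_pt; simpl; pose proof (sin2_cos2 t); unfold Rsqr in *; lra. Qed.

Lemma dot3_circle_pt t u : dot3 (circle_pt t) (circle_pt u) = cos (u - t).
Proof. unfold circle_pt; simpl; rewrite cos_minus; ring. Qed.

Lemma dS2_circle_pt t u : 0 <= u - t <= PI -> dS2 (circle_pt t) (circle_pt u) = u - t.
Proof. intros; unfold dS2; rewrite dot3_circle_pt; apply acos_cos; assumption. Qed.

(* [circle_pt 0 + circle_pt a = 2 cos (a/2) circle_pt (a/2)] *)
Lemma dot3_circle_pt_mid a y :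
  2 * cos (a / 2) * dot3 (circle_pt (a / 2)) y = dot3 (circle_pt 0) y + dot3 (circle_pt a) y.
Proof.
  destruct y as [[y1 y2] y3]; unfold circle_pt; simpl.
  pose proof (form1 a 0) as Hc; pose proof (form3 a 0) as Hs.
  rewrite Rminus_0_r, Rplus_0_r, cos_0, sin_0 in *.
  replace (cos a) with (2 * cos (a / 2) * cos (a / 2) - 1) by lra.
  replace (sin a) with (2 * cos (a / 2) * sin (a / 2)) by lra; ring.
Qed.

Lemma S2_third_vertex a b e : 0 < a < PI -> 0 <= b -> a + b <= PI -> Rabs (a - b) <= e <= a + b ->
  exists y, on_S2 y /\ dot3 (circle_pt 0) y = cos b /\ dot3 (circle_pt a) y = cos e.
Proof.
  intros Ha Hb Hab He.
  assert (Hsa : 0 < sin a) by (apply sin_gt_0; lra).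
  assert (Hsb : 0 <= sin b) by (apply sin_ge_0; lra).
  assert (Hsb2 : sin b * sin b = 1 - cos b * cos b)
    by (pose proof (sin2_cos2 b); unfold Rsqr in *; lra).
  assert (Hlo : cos (a + b) <= cos e) by (apply cos_antitone; pose proof (Rabs_pos (a - b)); lra).
  assert (Hhi : cos e <= cos (a - b)).
  { destruct (Rle_or_lt 0 (a - b)).
    - rewrite Rabs_pos_eq in He by lra; apply cos_antitone; lra.
    - rewrite Rabs_left in He by lra; rewrite <- (cos_neg (a - b)); apply cos_antitone; lra. }
  rewrite cos_plus in Hlo; rewrite cos_minus in Hhi.
  set (beta := (cos e - cos a * cos b) / sin a).
  assert (Hbeta : sin a * beta = cos e - cos a * cos b) by (unfold beta; field; lra).
  assert (Hbeta2 : beta * beta <= 1 - cos b * cos b).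
  { rewrite <- Hsb2; apply (Rmult_le_reg_l (sin a * sin a)); [nra|].
    assert (Hsasb : 0 <= sin a * sin b) by nra. nra. }
  exists (cos b, beta, sqrt (1 - cos b * cos b - beta * beta)).
  pose proof (sqrt_sqrt (1 - cos b * cos b - beta * beta) ltac:(lra)).
  unfold on_S2, circle_pt; simpl; rewrite cos_0, sin_0; repeat split; lra.
Qed.

Lemma side_point_start {X : Type} (d : X -> X -> R) c x y xb yb :
  is_geodesic d c x y -> on_S2 xb -> dS2 xb yb = d x y -> side_point d c x y xb yb x xb.
Proof.
  intros [Hc0 _] Hxb Hd; exists 0.
  pose proof (acos_bound (dot3 xb yb)); unfold dS2 in Hd.
  repeat split; try lra; [symmetry; exact Hc0|exact Hxb| |unfold dS2; lra].
  unfold dS2; rewrite Hxb; apply acos_1.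
Qed.

Lemma side_point_circle_pt {X : Type} (d : X -> X -> R) c x y t :
  d x y <= PI -> 0 <= t <= d x y ->
  side_point d c x y (circle_pt 0) (circle_pt (d x y)) (c t) (circle_pt t).
Proof.
  intros Hd Ht; exists t; repeat split; try lra; [apply on_S2_circle_pt|..];
    rewrite dS2_circle_pt; lra.
Qed.

Lemma CAT1_midpoint_cos_ineq {X : Type} (d : X -> X -> R) : CAT1_space d -> admissible d ->
  forall y p, exists m, forall x,
    cos (d x y) + cos (d x p) <= 2 * cos (d y p / 2) * cos (d x m).
Proof.
  intros [[Hpos [Hzero [Hsym Htri]]] [Hgeo Hcat]] Hadm y p.
  pose proof PI_RGT_0.
  destruct (classic (y = p)) as [<-|Hyp].
  { exists y; intros x; rewrite (proj2 (Hzero y y) eq_refl), Rdiv_0_l, cos_0; lra. }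
  set (a := d y p).
  assert (Ha : 0 < a < PI / 2).
  { split; [|apply Hadm]. destruct (Hpos y p) as [|Ha0]; [assumption|].
    exfalso; apply Hyp, Hzero; symmetry; exact Ha0. }
  destruct (Hgeo y p ltac:(fold a; lra)) as [c Hc].
  exists (c (a / 2)); intros x.
  destruct (Hgeo p x ltac:(pose proof (Hadm p x); lra)) as [c2 Hc2].
  destruct (Hgeo x y ltac:(pose proof (Hadm x y); lra)) as [c3 Hc3].
  set (b := d x y); set (e := d p x).
  assert (Hb : 0 <= b < PI / 2) by (split; [apply Hpos|apply Hadm]).
  assert (He : Rabs (a - b) <= e <= a + b).
  { pose proof (Htri p y x); pose proof (Htri y x p); pose proof (Htri x p y).
    pose proof (Hsym p y); pose proof (Hsym y x); pose proof (Hsym x p).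
    unfold a, b, e; split; [apply Rabs_le|]; lra. }
  assert (He' : 0 <= e <= PI) by (pose proof (Rabs_pos (a - b)); lra).
  (* Comparison triangle: y, p, x correspond to circle_pt 0, circle_pt a and y3, and the
     midpoint c (a/2) of the side [y, p] to circle_pt (a/2). *)
  destruct (S2_third_vertex a b e ltac:(lra) ltac:(lra) ltac:(lra) He) as [y3 [Hy3 [Hy3b Hy3e]]].
  assert (D12 : dS2 (circle_pt 0) (circle_pt a) = d y p) by (rewrite dS2_circle_pt; [unfold a; ring|lra]).
  assert (D23 : dS2 (circle_pt a) y3 = d p x) by (unfold dS2; rewrite Hy3e; apply acos_cos, He').
  assert (D31 : dS2 y3 (circle_pt 0) = d x y)
    by (unfold dS2; rewrite dot3_comm, Hy3b; apply acos_cos; fold b; lra).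
  assert (Hper : d y p + d p x + d x y < 2 * PI) by (fold a b e; lra).
  pose proof (side_point_circle_pt d c y p (a / 2) ltac:(fold a; lra) ltac:(fold a; lra)) as Hm.
  pose proof (side_point_start d c3 x y y3 (circle_pt 0) Hc3 Hy3 D31) as Hx.
  pose proof (Hcat y p x c c2 c3 Hc Hc2 Hc3 Hper _ _ _ (on_S2_circle_pt 0) (on_S2_circle_pt a) Hy3
    D12 D23 D31) as Hcmp; cbv zeta in Hcmp.
  specialize (Hcmp _ _ _ _ (or_introl Hm) (or_intror (or_intror Hx))).
  rewrite (Hsym x p), (Hsym x (c (a / 2))); fold e.
  rewrite <- Hy3b, <- Hy3e, <- dot3_circle_pt_mid.
  assert (Hcos : 0 <= cos (a / 2)) by (apply cos_ge_0; lra).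
  apply Rmult_le_compat_l; [lra|].
  apply dot3_le_cos_of_le_dS2; [apply on_S2_circle_pt|exact Hy3|apply Hpos|exact Hcmp].
Qed.

Lemma strictly_increasing_ge_id (phi : nat -> nat) :
  (forall i, (phi i < phi (S i))%nat) -> forall i, (i <= phi i)%nat.
Proof. intros Hphi i; induction i as [|i IH]; [lia|specialize (Hphi i); lia]. Qed.

Lemma Un_cv_subseq (a : nat -> R) (L : R) (phi : nat -> nat) :
  (forall i, (phi i < phi (S i))%nat) -> Un_cv a L -> Un_cv (fun i => a (phi i)) L.
Proof.
  intros Hphi Ha eps Heps; destruct (Ha eps Heps) as [N HN].
  exists N; intros i Hi; apply HN; pose proof (strictly_increasing_ge_id phi Hphi i); lia.
Qed.

Lemma is_limsup_of_Un_cv (a : nat -> R) (L : R) : Un_cv a L -> is_limsup a L.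
Proof.
  intros Ha eps Heps; destruct (Ha eps Heps) as [N HN]; split.
  - exists N; intros n Hn; specialize (HN n Hn); unfold Rdist in HN.
    pose proof (Rle_abs (a n - L)); lra.
  - intros M; exists (N + M)%nat; split; [lia|].
    specialize (HN (N + M)%nat ltac:(lia)); unfold Rdist in HN.
    rewrite Rabs_minus_sym in HN; pose proof (Rle_abs (L - a (N + M)%nat)); lra.
Qed.

Lemma Un_cv_of_decreasing_limsup (a : nat -> R) (L : R) :
  Un_decreasing a -> is_limsup a L -> Un_cv a L.
Proof.
  intros Hdec HL eps Heps; destruct (HL eps Heps) as [[N HN] _].
  assert (Hlow : forall n, L <= a n).
  { intros n; apply Rnot_lt_le; intros Hlt.
    destruct (proj2 (HL (L - a n) ltac:(lra)) n) as [m [Hm Ham]].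
    pose proof (decreasing_prop a n m Hdec Hm); lra. }
  exists N; intros n Hn; specialize (HN n Hn); specialize (Hlow n).
  unfold Rdist; rewrite Rabs_pos_eq; lra.
Qed.

Lemma is_limsup_exists (a : nat -> R) (B : R) :
  (forall n, 0 <= a n <= B) -> exists L, is_limsup a L.
Proof.
  intros Hb; destruct (Lim_seq.ex_LimSup_seq a) as [[l| |] Hl]; simpl in Hl.
  - exists l; intros eps Heps; destruct (Hl (mkposreal eps Heps)) as [Hfreq [N Hev]]; split.
    + exists N; intros n Hn; apply Hev; lia.
    + intros M; destruct (Hfreq M) as [n [Hn Han]]; exists n; split; [lia|exact Han].
  - exfalso; destruct (Hl B 0%nat) as [n [_ Hn]]; specialize (Hb n); lra.
  - exfalso; destruct (Hl 0) as [N HN]; specialize (HN N (le_n N)); specialize (Hb N); lra.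
Qed.

Lemma is_limsup_bounds (a : nat -> R) (L B : R) :
  (forall n, 0 <= a n <= B) -> is_limsup a L -> 0 <= L <= B.
Proof.
  intros Hb HL; split; apply Rnot_lt_le; intros Hlt.
  - destruct (HL (- L) ltac:(lra)) as [[N HN] _].
    specialize (HN N (le_n N)); specialize (Hb N); lra.
  - destruct (proj2 (HL (L - B) ltac:(lra)) 0%nat) as [n [_ Hn]]; specialize (Hb n); lra.
Qed.

Lemma is_limsup_unique (a : nat -> R) (L1 L2 : R) : is_limsup a L1 -> is_limsup a L2 -> L1 = L2.
Proof.
  assert (Hle : forall A B, is_limsup a A -> is_limsup a B -> A <= B).
  { intros A B HA HB; apply Rnot_lt_le; intros Hlt.
    destruct (HB ((A - B) / 2) ltac:(lra)) as [[N HN] _].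
    destruct (proj2 (HA ((A - B) / 2) ltac:(lra)) N) as [n [Hn Han]].
    specialize (HN n Hn); lra. }
  intros H1 H2; apply Rle_antisym; [apply Hle with (1 := H1)|apply Hle with (1 := H2)]; assumption.
Qed.

Section CosLimsup.

Variables (a : nat -> R) (L : R).
Hypothesis a_bounds : forall n, 0 <= a n <= PI / 2.
Hypothesis a_limsup : is_limsup a L.

Lemma cos_limsup_sub_le_eventually eps : eps > 0 ->
  exists N, forall n, (n >= N)%nat -> cos L - eps <= cos (a n).
Proof.
  intros Heps; pose proof (is_limsup_bounds a L _ a_bounds a_limsup); pose proof PI2_1.
  set (e := Rmin eps 1).
  assert (He : 0 < e <= eps /\ e <= 1)
    by (unfold e; split; [split; [apply Rmin_glb_lt|apply Rmin_l]|apply Rmin_r]; lra).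
  destruct (a_limsup e ltac:(lra)) as [[N HN] _]; exists N; intros n Hn.
  specialize (HN n Hn); specialize (a_bounds n).
  pose proof (cos_antitone (a n) (L + e) ltac:(lra) ltac:(lra) ltac:(lra)).
  pose proof (cos_ge_sub_abs L (L + e)) as Hlip.
  rewrite Rabs_left1 in Hlip by lra; lra.
Qed.

Lemma cos_le_limsup_add_frequently eps : eps > 0 ->
  forall N, exists n, (n >= N)%nat /\ cos (a n) <= cos L + eps.
Proof.
  intros Heps N; pose proof (is_limsup_bounds a L _ a_bounds a_limsup); pose proof PI2_1.
  destruct (proj2 (a_limsup eps Heps) N) as [n [Hn Han]]; exists n; split; [exact Hn|].
  specialize (a_bounds n).
  destruct (Rle_or_lt 0 (L - eps)).
  - pose proof (cos_antitone (L - eps) (a n) ltac:(lra) ltac:(lra) ltac:(lra)).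
    pose proof (cos_ge_sub_abs (L - eps) L) as Hlip.
    rewrite Rabs_left1 in Hlip by lra; lra.
  - pose proof (cos_ge_sub_abs 0 L) as Hlip; rewrite cos_0, Rabs_left1 in Hlip by lra.
    pose proof (COS_bound (a n)); lra.
Qed.

Lemma le_cos_limsup c :
  (forall eps, eps > 0 -> exists N, forall n, (n >= N)%nat -> c - eps <= cos (a n)) ->
  c <= cos L.
Proof.
  intros Hc; apply Rnot_lt_le; intros Hlt; set (e := (c - cos L) / 3).
  destruct (Hc e ltac:(unfold e; lra)) as [N HN].
  destruct (cos_le_limsup_add_frequently e ltac:(unfold e; lra) N) as [n [Hn Han]].
  specialize (HN n Hn); unfold e in *; lra.
Qed.

End CosLimsup.

(* The firmly vicinal inequality for the pair (u, z), with Cx = cos d(Tu,u),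
   Cy = cos d(Tz,z), P = cos d(Tu,Tz), Q = cos d(Tu,z) and R0 = cos d(Tz,u). *)
Lemma firmly_vicinal_ineq_bound Cx Cy P Q R0 delta :
  1 / 2 <= Cx <= 1 -> 0 <= Cy <= 1 -> 0 <= P -> 0 <= delta -> P <= R0 + delta ->
  (Cx ^ 2 * (1 + Cy ^ 2) * Cy + Cy ^ 2 * (1 + Cx ^ 2) * Cx) * P >=
    Cx ^ 2 * (1 + Cy ^ 2) * Q + Cy ^ 2 * (1 + Cx ^ 2) * R0 ->
  Q - 9 * delta <= R0.
Proof.
  intros HCx HCy HP Hd HPR HFV.
  assert (HCx2 : 1 / 4 <= Cx ^ 2 <= 1) by (split; nra).
  assert (HCy2 : 0 <= Cy ^ 2 <= 1) by (split; nra).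
  assert (Hw : 1 / 4 <= Cx ^ 2 * (1 + Cy ^ 2)) by nra.
  assert (Hv : 0 <= Cy ^ 2 * (1 + Cx ^ 2) <= 2) by (split; nra).
  assert (Hsecond : Cy ^ 2 * (1 + Cx ^ 2) * (Cx * P - R0) <= 2 * delta).
  { destruct (Rle_or_lt 0 (Cx * P - R0)); [|nra].
    assert (Cx * P - R0 <= delta) by nra. nra. }
  assert (Hfirst : Cy * P - Q >= - 8 * delta).
  { destruct (Rle_or_lt 0 (Cy * P - Q)); [lra|nra]. }
  nra.
Qed.

Section AdmissibleSpace.

Context {X : Type} (d : X -> X -> R).
Hypothesis d_metric : is_metric d.
Hypothesis d_admissible : admissible d.

Lemma dist_bounds u v : 0 <= d u v <= PI / 2.
Proof. split; [apply (proj1 d_metric)|left; apply d_admissible]. Qed.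

Lemma dist_diff_le w y z : Rabs (d w y - d w z) <= d y z.
Proof.
  destruct d_metric as [_ [_ [Hsym Htri]]].
  pose proof (Htri w y z); pose proof (Htri w z y); pose proof (Hsym z y).
  apply Rabs_le; lra.
Qed.

Lemma is_limsup_dist_exists (s : nat -> X) y : exists L, is_limsup (fun n => d (s n) y) L.
Proof. apply (is_limsup_exists _ (PI / 2)); intros n; apply dist_bounds. Qed.

Lemma is_limsup_dist_bounds (s : nat -> X) y L :
  is_limsup (fun n => d (s n) y) L -> 0 <= L <= PI / 2.
Proof. apply is_limsup_bounds; intros n; apply dist_bounds. Qed.

Lemma cos_limsup_dist_lipschitz (s : nat -> X) y z Ly Lz :
  is_limsup (fun n => d (s n) y) Ly -> is_limsup (fun n => d (s n) z) Lz ->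
  cos Ly - d y z <= cos Lz.
Proof.
  intros Hy Hz; apply (le_cos_limsup _ _ (fun n => dist_bounds _ _) Hz); intros eps Heps.
  destruct (cos_limsup_sub_le_eventually _ _ (fun n => dist_bounds _ _) Hy eps Heps) as [N HN].
  exists N; intros n Hn; specialize (HN n Hn).
  pose proof (cos_ge_sub_abs (d (s n) y) (d (s n) z)); pose proof (dist_diff_le (s n) y z); lra.
Qed.

(* Keeps the cosine of the minimal asymptotic radius of [s] positive. *)
Definition radius_lt_pi2 (s : nat -> X) : Prop :=
  exists y L, is_limsup (fun n => d (s n) y) L /\ L < PI / 2.

(* The radii of p and z are the same along [s] and along the subsequence, and each is
   minimal for one of them, so they coincide. *)
Lemma in_AC_subseq_of_Un_cv (s : nat -> X) (phi : nat -> nat) p z Lp Lz :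
  (forall i, (phi i < phi (S i))%nat) ->
  Un_cv (fun n => d (s n) p) Lp -> Un_cv (fun n => d (s n) z) Lz ->
  in_AC d s p -> in_AC d (fun i => s (phi i)) z -> in_AC d (fun i => s (phi i)) p.
Proof.
  intros Hphi Hp Hz [Lp' [HLp' Hpmin]] [Lz' [HLz' Hzmin]].
  pose proof (is_limsup_of_Un_cv _ _ (Un_cv_subseq _ _ _ Hphi Hp)) as HLp_sub.
  pose proof (is_limsup_of_Un_cv _ _ (Un_cv_subseq _ _ _ Hphi Hz)) as HLz_sub.
  pose proof (is_limsup_unique _ _ _ HLp' (is_limsup_of_Un_cv _ _ Hp)); subst Lp'.
  pose proof (is_limsup_unique _ _ _ HLz' HLz_sub); subst Lz'.
  pose proof (Hpmin z Lz (is_limsup_of_Un_cv _ _ Hz)).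
  exists Lp; split; [exact HLp_sub|]; intros y Ly HLy; pose proof (Hzmin y Ly HLy); lra.
Qed.

Context (T : X -> X).
Hypothesis T_firmly_vicinal : firmly_vicinal d T.

Lemma firmly_vicinal_cos_fix q x : T q = q ->
  cos (d x q) <= cos (d (T x) x) * cos (d (T x) q).
Proof.
  intros Hq; pose proof (T_firmly_vicinal x q) as HFV; cbv zeta in HFV.
  destruct d_metric as [_ [Hzero [Hsym _]]].
  rewrite Hq, (proj2 (Hzero q q) eq_refl), cos_0, (Hsym q x) in HFV.
  assert (0 < 1 + cos (d (T x) x) ^ 2) by nra.
  apply (Rmult_le_reg_l (1 + cos (d (T x) x) ^ 2)); [lra|nra].
Qed.

Lemma firmly_vicinal_quasi_nonexpansive q x : T q = q -> d (T x) q <= d x q.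
Proof.
  intros Hq; pose proof (firmly_vicinal_cos_fix q x Hq); pose proof PI_RGT_0.
  pose proof (dist_bounds (T x) x); pose proof (dist_bounds (T x) q); pose proof (dist_bounds x q).
  assert (0 <= cos (d (T x) x) <= 1) by (split; [apply cos_ge_0; lra|apply COS_bound]).
  assert (0 <= cos (d (T x) q)) by (apply cos_ge_0; lra).
  apply cos_le_cos_reflect; [lra|lra|nra].
Qed.

Lemma cos_dist_to_image_ge u z : d (T u) u <= 1 / 2 ->
  cos (d u z) - 10 * d (T u) u <= cos (d u (T z)).
Proof.
  intros Hu; pose proof (T_firmly_vicinal u z) as HFV; cbv zeta in HFV.
  destruct d_metric as [Hpos [_ [Hsym _]]]; pose proof PI_RGT_0.
  assert (HCx : 1 / 2 <= cos (d (T u) u) <= 1).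
  { split; [|apply COS_bound]; pose proof (Hpos (T u) u).
    pose proof (cos_ge_sub_abs 0 (d (T u) u)) as Hlip.
    rewrite cos_0, Rabs_left1 in Hlip by lra; lra. }
  assert (HCy : 0 <= cos (d (T z) z) <= 1).
  { split; [|apply COS_bound]; pose proof (dist_bounds (T z) z); apply cos_ge_0; lra. }
  assert (HP : 0 <= cos (d (T u) (T z)))
    by (pose proof (dist_bounds (T u) (T z)); apply cos_ge_0; lra).
  assert (HPR : cos (d (T u) (T z)) <= cos (d (T z) u) + d (T u) u).
  { pose proof (cos_ge_sub_abs (d (T z) (T u)) (d (T z) u)) as Hlip.
    pose proof (dist_diff_le (T z) (T u) u) as Htri.
    rewrite (Hsym (T z) (T u)) in Hlip, Htri; lra. }
  assert (HQ : cos (d u z) - d (T u) u <= cos (d (T u) z)).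
  { pose proof (cos_ge_sub_abs (d z u) (d z (T u))) as Hlip.
    pose proof (dist_diff_le z u (T u)) as Htri.
    rewrite (Hsym z u), (Hsym z (T u)), (Hsym u (T u)) in *; lra. }
  pose proof (firmly_vicinal_ineq_bound _ _ _ _ _ _ HCx HCy HP (Hpos (T u) u) HPR HFV).
  rewrite (Hsym u (T z)); lra.
Qed.

Lemma orbit_dist_fix_decreasing q x : T q = q -> Un_decreasing (fun n => d (Nat.iter n T x) q).
Proof. intros Hq n; apply firmly_vicinal_quasi_nonexpansive, Hq. Qed.

Lemma orbit_dist_fix_cv q x : T q = q -> exists L, Un_cv (fun n => d (Nat.iter n T x) q) L.
Proof.
  intros Hq; destruct (is_limsup_dist_exists (fun n => Nat.iter n T x) q) as [L HL].
  exists L; apply Un_cv_of_decreasing_limsup; [apply orbit_dist_fix_decreasing, Hq|exact HL].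
Qed.

Lemma orbit_asymptotically_regular q x : T q = q ->
  Un_cv (fun n => d (T (Nat.iter n T x)) (Nat.iter n T x)) 0.
Proof.
  intros Hq; pose proof (orbit_dist_fix_decreasing q x Hq) as Hdec.
  destruct (is_limsup_dist_exists (fun n => Nat.iter n T x) q) as [L HL].
  pose proof (is_limsup_dist_bounds _ _ _ HL); pose proof PI_RGT_0.
  pose proof (Un_cv_of_decreasing_limsup _ _ Hdec HL) as Hcv.
  pose proof (decreasing_ineq _ _ Hdec Hcv) as Hlow.
  assert (Hg : 0 < cos L) by (pose proof (Hlow 0%nat); pose proof (d_admissible x q); simpl in *;
    apply cos_gt_0; lra).
  (* Both d(x_n,q) and d(T x_n,q) tend to L, so firmly_vicinal_cos_fix forces
     cos d(T x_n, x_n) -> 1. *)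
  intros eps Heps; pose proof (pow_lt eps 2 Heps).
  destruct (Hcv (cos L * eps ^ 2 / 6)) as [N HN]; [nra|].
  exists N; intros n Hn; specialize (HN n Hn); unfold Rdist in HN.
  pose proof (Hlow (S n)) as HTu; simpl in HTu.
  set (u := Nat.iter n T x) in *.
  pose proof (firmly_vicinal_cos_fix q u Hq).
  pose proof (dist_bounds (T u) u); pose proof (dist_bounds (T u) q).
  assert (0 <= cos (d (T u) u)) by (apply cos_ge_0; lra).
  assert (cos (d (T u) q) <= cos L) by (apply cos_antitone; lra).
  assert (cos L - cos L * eps ^ 2 / 6 < cos (d u q))
    by (pose proof (cos_ge_sub_abs L (d u q)); rewrite Rabs_minus_sym in HN; lra).
  assert (1 - cos (d (T u) u) < eps ^ 2 / 6) by (apply (Rmult_lt_reg_l (cos L)); [exact Hg|nra]).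
  unfold Rdist; rewrite Rminus_0_r, Rabs_pos_eq by lra.
  apply lt_of_1_sub_cos_lt; lra.
Qed.

Lemma orbit_subseq_radius_lt_pi2 q x phi : T q = q -> (forall i, (phi i < phi (S i))%nat) ->
  radius_lt_pi2 (fun i => Nat.iter (phi i) T x).
Proof.
  intros Hq Hphi; destruct (orbit_dist_fix_cv q x Hq) as [L HL].
  exists q, L; split; [exact (is_limsup_of_Un_cv _ _ (Un_cv_subseq _ L phi Hphi HL))|].
  pose proof (decreasing_ineq _ _ (orbit_dist_fix_decreasing q x Hq) HL 0%nat).
  pose proof (d_admissible x q); simpl in *; lra.
Qed.

Hypothesis d_CAT1 : CAT1_space d.

Lemma cos_limsup_midpoint (s : nat -> X) y p : exists m, forall Ly Lp Lm,
  is_limsup (fun n => d (s n) y) Ly -> is_limsup (fun n => d (s n) p) Lp ->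
  is_limsup (fun n => d (s n) m) Lm ->
  cos Ly + cos Lp <= 2 * cos (d y p / 2) * cos Lm.
Proof.
  destruct (CAT1_midpoint_cos_ineq d d_CAT1 d_admissible y p) as [m Hm].
  exists m; intros Ly Lp Lm Hy Hp HLm.
  set (h := cos (d y p / 2)); fold h in Hm.
  assert (Hh : 0 < h) by (apply cos_gt_0; pose proof (dist_bounds y p); pose proof PI_RGT_0; lra).
  set (c := (cos Ly + cos Lp) / (2 * h)).
  enough (c <= cos Lm) by (replace (cos Ly + cos Lp) with (2 * h * c) by (unfold c; field; lra); nra).
  apply (le_cos_limsup _ _ (fun n => dist_bounds _ _) HLm); intros eps Heps.
  destruct (cos_limsup_sub_le_eventually _ _ (fun n => dist_bounds _ _) Hy (eps * h) ltac:(nra))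
    as [N1 HN1].
  destruct (cos_limsup_sub_le_eventually _ _ (fun n => dist_bounds _ _) Hp (eps * h) ltac:(nra))
    as [N2 HN2].
  exists (N1 + N2)%nat; intros n Hn.
  specialize (HN1 n ltac:(lia)); specialize (HN2 n ltac:(lia)); specialize (Hm (s n)).
  apply (Rmult_le_reg_l (2 * h)); [lra|].
  replace (2 * h * (c - eps)) with (cos Ly + cos Lp - 2 * (eps * h)) by (unfold c; field; lra).
  lra.
Qed.

Lemma in_AC_unique (s : nat -> X) z z' :
  radius_lt_pi2 s -> in_AC d s z -> in_AC d s z' -> z = z'.
Proof.
  (* With common minimal radius L, the midpoint m of z and z' gives
     cos L <= cos (d z z' / 2) cos L, hence d z z' = 0. *)
  intros [y0 [L0 [H0 HL0]]] [L [HL Hmin]] [L' [HL' Hmin']].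
  assert (L' = L) by (apply Rle_antisym; [apply (Hmin' _ _ HL)|apply (Hmin _ _ HL')]); subst L'.
  assert (HL_lt : L < PI / 2) by (pose proof (Hmin _ _ H0); lra).
  destruct (cos_limsup_midpoint s z z') as [m Hm].
  destruct (is_limsup_dist_exists s m) as [Lm HLm].
  specialize (Hm _ _ _ HL HL' HLm).
  pose proof (is_limsup_dist_bounds _ _ _ HL); pose proof (is_limsup_dist_bounds _ _ _ HLm).
  pose proof (dist_bounds z z'); pose proof PI_RGT_0.
  assert (HcosL : 0 < cos L) by (apply cos_gt_0; lra).
  assert (Hh : 0 <= cos (d z z' / 2)) by (apply cos_ge_0; lra).
  assert (cos Lm <= cos L) by (apply cos_antitone; [lra|apply (Hmin _ _ HLm)|lra]).
  assert (Hh1 : cos 0 <= cos (d z z' / 2)) by (rewrite cos_0; nra).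
  pose proof (cos_le_cos_reflect 0 (d z z' / 2) ltac:(lra) ltac:(lra) Hh1).
  apply (proj1 (proj2 d_metric)); lra.
Qed.

Lemma near_sup_points_close (s : nat -> X) k delta y p Ly Lp : 0 < k ->
  (forall z Lz, is_limsup (fun n => d (s n) z) Lz -> cos Lz <= k) ->
  is_limsup (fun n => d (s n) y) Ly -> is_limsup (fun n => d (s n) p) Lp ->
  k - delta <= cos Ly -> k - delta <= cos Lp -> k * (1 - cos (d y p / 2)) <= delta.
Proof.
  intros Hk Hk_ge Hy Hp HLy HLp.
  destruct (cos_limsup_midpoint s y p) as [m Hm].
  destruct (is_limsup_dist_exists s m) as [Lm HLm].
  specialize (Hm _ _ _ Hy Hp HLm); pose proof (Hk_ge _ _ HLm).
  assert (Hh : 0 <= cos (d y p / 2))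
    by (apply cos_ge_0; pose proof (dist_bounds y p); pose proof PI_RGT_0; lra).
  nra.
Qed.

Lemma in_AC_fixed (s : nat -> X) z : radius_lt_pi2 s ->
  Un_cv (fun n => d (T (s n)) (s n)) 0 -> in_AC d s z -> T z = z.
Proof.
  (* Asymptotic regularity makes the radius of T z at most that of z, so T z is an
     asymptotic center as well. *)
  intros Hrad Hreg Hz; pose proof Hz as [Lz [HLz Hmin]].
  destruct (is_limsup_dist_exists s (T z)) as [LT HLT].
  assert (HcosLT : cos Lz <= cos LT).
  { apply (le_cos_limsup _ _ (fun n => dist_bounds _ _) HLT); intros eps Heps.
    destruct (cos_limsup_sub_le_eventually _ _ (fun n => dist_bounds _ _) HLz (eps / 2))
      as [N1 HN1]; [lra|].
    destruct (Hreg (Rmin (1 / 2) (eps / 20))) as [N2 HN2]; [apply Rmin_glb_lt; lra|].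
    exists (N1 + N2)%nat; intros n Hn; specialize (HN1 n ltac:(lia)); specialize (HN2 n ltac:(lia)).
    unfold Rdist in HN2; rewrite Rminus_0_r, Rabs_pos_eq in HN2 by apply (proj1 d_metric).
    pose proof (Rmin_l (1 / 2) (eps / 20)); pose proof (Rmin_r (1 / 2) (eps / 20)).
    pose proof (cos_dist_to_image_ge (s n) z ltac:(lra)); lra. }
  pose proof (is_limsup_dist_bounds _ _ _ HLz); pose proof (is_limsup_dist_bounds _ _ _ HLT).
  pose proof PI_RGT_0.
  assert (HLT_le : LT <= Lz) by (apply (cos_le_cos_reflect Lz LT); lra).
  symmetry; apply (in_AC_unique s z (T z) Hrad Hz).
  exists LT; split; [exact HLT|]; intros y Ly HLy; pose proof (Hmin _ _ HLy); lra.
Qed.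

Lemma orbit_subseq_in_AC_fixed q x phi z : T q = q -> (forall i, (phi i < phi (S i))%nat) ->
  in_AC d (fun i => Nat.iter (phi i) T x) z -> T z = z.
Proof.
  intros Hq Hphi; apply in_AC_fixed; [exact (orbit_subseq_radius_lt_pi2 q x phi Hq Hphi)|].
  exact (Un_cv_subseq _ 0 phi Hphi (orbit_asymptotically_regular q x Hq)).
Qed.

Hypothesis d_complete : complete_metric d.

Lemma near_sup_seq_cauchy (s : nat -> X) k (Y : nat -> X) : 0 < k ->
  (forall z Lz, is_limsup (fun n => d (s n) z) Lz -> cos Lz <= k) ->
  (forall j, exists L, is_limsup (fun n => d (s n) (Y j)) L /\ k - / INR (S j) < cos L) ->
  forall eps, eps > 0 -> exists N, forall m n, (m >= N)%nat -> (n >= N)%nat -> d (Y m) (Y n) < eps.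
Proof.
  intros Hk Hk_ge HY eps Heps.
  destruct (archimed_cor1 (k * eps ^ 2 / 12)) as [N [HN HN0]]; [pose proof (pow_lt eps 2 Heps); nra|].
  assert (Hinv : forall j, (j >= N)%nat -> / INR (S j) <= / INR N)
    by (intros j Hj; apply Rinv_le_contravar; [apply lt_0_INR; lia|apply le_INR; lia]).
  exists N; intros m n Hm Hn.
  destruct (HY m) as [Lm [HLm Hm']]; destruct (HY n) as [Ln [HLn Hn']].
  pose proof (Hinv m Hm); pose proof (Hinv n Hn).
  pose proof (near_sup_points_close s k (/ INR N) _ _ _ _ Hk Hk_ge HLm HLn ltac:(lra) ltac:(lra)).
  pose proof (dist_bounds (Y m) (Y n)).
  enough (d (Y m) (Y n) / 2 < eps / 2) by lra.
  apply lt_of_1_sub_cos_lt; [lra|lra|].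
  apply (Rmult_lt_reg_l k); [exact Hk|].
  replace (k * ((eps / 2) ^ 2 / 3)) with (k * eps ^ 2 / 12) by field; lra.
Qed.

Lemma in_AC_exists (s : nat -> X) : radius_lt_pi2 s -> exists z, in_AC d s z.
Proof.
  (* [k] is the supremum of the cosines of the asymptotic radii; points [Y j] nearly
     attaining it form a Cauchy sequence whose limit attains it. *)
  intros [y0 [L0 [H0 HL0]]].
  set (E := fun r => exists y L, is_limsup (fun n => d (s n) y) L /\ r = cos L).
  destruct (completeness E) as [k [Hk_ub Hk_lub]].
  { exists 1; intros r [y [L [_ ->]]]; apply COS_bound. }
  { exists (cos L0), y0, L0; split; [exact H0|reflexivity]. }
  assert (Hk_ge : forall y L, is_limsup (fun n => d (s n) y) L -> cos L <= k)
    by (intros y L HL; apply Hk_ub; exists y, L; split; [exact HL|reflexivity]).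
  assert (Hk : 0 < k).
  { pose proof (Hk_ge _ _ H0); pose proof (is_limsup_dist_bounds _ _ _ H0).
    assert (0 < cos L0) by (apply cos_gt_0; pose proof PI_RGT_0; lra); lra. }
  assert (Happrox : forall j : nat, exists y L,
    is_limsup (fun n => d (s n) y) L /\ k - / INR (S j) < cos L).
  { intros j; apply NNPP; intros Hnone.
    assert (0 < / INR (S j)) by (apply Rinv_0_lt_compat, lt_0_INR; lia).
    enough (k <= k - / INR (S j)) by lra.
    apply Hk_lub; intros r [y [L [HL ->]]]; apply Rnot_lt_le; intros Hlt.
    apply Hnone; exists y, L; split; assumption. }
  destruct (choice _ Happrox) as [Y HY].
  destruct (d_complete Y (near_sup_seq_cauchy s k Y Hk Hk_ge HY)) as [l Hl].
  destruct (is_limsup_dist_exists s l) as [Ll HLl].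
  assert (Hk_le : k <= cos Ll).
  { apply Rle_plus_epsilon; intros eps Heps.
    destruct (Hl (eps / 2) ltac:(lra)) as [N1 HN1].
    destruct (archimed_cor1 (eps / 2) ltac:(lra)) as [N2 [HN2 HN2pos]].
    destruct (HY (N1 + N2)%nat) as [Lj [HLj Hj]].
    pose proof (cos_limsup_dist_lipschitz s _ l Lj Ll HLj HLl).
    specialize (HN1 (N1 + N2)%nat ltac:(lia)).
    assert (/ INR (S (N1 + N2)) <= / INR N2)
      by (apply Rinv_le_contravar; [apply lt_0_INR; lia|apply le_INR; lia]).
    lra. }
  exists l, Ll; split; [exact HLl|]; intros y Ly HLy.
  pose proof (Hk_ge _ _ HLy); pose proof (is_limsup_dist_bounds _ _ _ HLy).
  pose proof (is_limsup_dist_bounds _ _ _ HLl); pose proof PI_RGT_0.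
  apply (cos_le_cos_reflect Ly Ll); lra.
Qed.

Lemma orbit_in_AC_subseq q x phi p : T q = q -> (forall i, (phi i < phi (S i))%nat) ->
  in_AC d (fun n => Nat.iter n T x) p -> in_AC d (fun i => Nat.iter (phi i) T x) p.
Proof.
  intros Hq Hphi Hp.
  assert (Hid : forall i : nat, (i < S i)%nat) by (intros; lia).
  pose proof (orbit_subseq_in_AC_fixed q x (fun i => i) p Hq Hid Hp) as Hp_fix.
  destruct (in_AC_exists _ (orbit_subseq_radius_lt_pi2 q x phi Hq Hphi)) as [w Hw].
  pose proof (orbit_subseq_in_AC_fixed q x phi w Hq Hphi Hw) as Hw_fix.
  destruct (orbit_dist_fix_cv p x Hp_fix) as [Lp HLp].
  destruct (orbit_dist_fix_cv w x Hw_fix) as [Lw HLw].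
  exact (in_AC_subseq_of_Un_cv _ phi p w Lp Lw Hphi HLp HLw Hp Hw).
Qed.

End AdmissibleSpace.

Theorem theorem4p5 (X : Type) (d : X -> X -> R) (T : X -> X) :
  CAT1_space d -> admissible d -> complete_metric d ->
  firmly_vicinal d T ->
  (exists p, T p = p) ->
  forall x : X, exists p, T p = p /\ Delta_converges d (fun n => Nat.iter n T x) p.
Proof.
  intros HCAT Hadm Hcomplete HF [q Hq] x.
  pose proof (proj1 HCAT) as Hmet.
  assert (Hid : forall i : nat, (i < S i)%nat) by (intros; lia).
  destruct (in_AC_exists d Hmet Hadm HCAT Hcomplete _
    (orbit_subseq_radius_lt_pi2 d Hmet Hadm T HF q x _ Hq Hid)) as [p Hp].
  exists p; split; [exact (orbit_subseq_in_AC_fixed d Hmet Hadm T HF HCAT q x _ p Hq Hid Hp)|].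
  intros phi Hphi z.
  pose proof (orbit_in_AC_subseq d Hmet Hadm T HF HCAT Hcomplete q x phi p Hq Hphi Hp) as Hp_sub.
  split; [intros Hz|intros ->; exact Hp_sub].
  exact (in_AC_unique d Hmet Hadm HCAT _ z p
    (orbit_subseq_radius_lt_pi2 d Hmet Hadm T HF q x phi Hq Hphi) Hz Hp_sub).
Qed.
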